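(* Let $m\ge1$, $r\ge0$ be integers and $S_m(r)=S_m(r,r)$. Then $$\mathrm{vol}(S_m^{\rm cube}(r))=\sum_{j=0}^{\min\{m,r\}}\binom mj\binom rj\binom{r+m-j}{m-j},\qquad \mathrm{vol}(S_m^{\rm conv}(r))=\frac{r^m}{m!}\binom{2m}{m},$$ and for every fixed $m\ge1$, $\lim_{r\to\infty}\mathrm{vol}(S^{\rm conv}_m(r))/\mathrm{vol}(S^{\rm cube}_m(r))=1$.
   Context: $S_m(r^+,r^-)=\{\mathbf x\in\mathbb Z^m:\sum_{i:x_i>0}x_i\le r^+,\ \sum_{i:x_i<0}|x_i|\le r^-\}$; $S_m(r,r)$ is the ball of radius $r$ around $\mathbf 0$ in $(\mathbb Z^m,d_a)$, where $d_a(\mathbf x,\mathbf y)=\max\{\sum_{i:x_i>y_i}(x_i-y_i),\sum_{i:x_i<y_i}(y_i-x_i)\}$. For $S\subset\mathbb Z^m$, $S^{\rm cube}=\bigcup_{\mathbf y\in S}(\mathbf y+[-1/2,1/2]^m)\subset\mathbb R^m$ and $S^{\rm conv}$ is the convex hull of $S$ in $\mathbb R^m$; vol is Lebesgue measure. *)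

From Stdlib Require Import Reals Lra Lia ZArith List.
Import ListNotations.
Open Scope R_scope.

(* Points of R^m : functions nat -> R, only coordinates i < m matter.
   Points of Z^m : lists of integers of length m. *)

Definition Sm (m rp rn : nat) (p : list Z) : Prop :=
  length p = m /\
  (fold_right (fun x acc => Z.max x 0 + acc) 0 p <= Z.of_nat rp)%Z /\
  (fold_right (fun x acc => Z.max (- x) 0 + acc) 0 p <= Z.of_nat rn)%Z.

Definition cubeset (m : nat) (S : list Z -> Prop) (y : nat -> R) : Prop :=
  exists p, S p /\ forall i, (i < m)%nat ->
    IZR (nth i p 0%Z) - 1/2 <= y i <= IZR (nth i p 0%Z) + 1/2.

Definition convset (m : nat) (S : list Z -> Prop) (y : nat -> R) : Prop :=
  exists l : list (R * list Z),
    (forall c, In c l -> 0 <= fst c /\ S (snd c)) /\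
    fold_right (fun c a => fst c + a) 0 l = 1 /\
    forall i, (i < m)%nat ->
      y i = fold_right (fun c a => fst c * IZR (nth i (snd c) 0%Z) + a) 0 l.

Definition gcube (m N : nat) (k : list Z) (y : nat -> R) : Prop :=
  forall i, (i < m)%nat ->
    IZR (nth i k 0%Z) / INR N <= y i <= (IZR (nth i k 0%Z) + 1) / INR N.

Definition count_is (m : nat) (P : list Z -> Prop) (c : nat) : Prop :=
  exists l : list (list Z), NoDup l /\ length l = c /\
    forall k, In k l <-> (length k = m /\ P k).

(* A (subset of R^m) is Jordan measurable with content v: inner and outer
   grid approximations at mesh 1/N both converge to v. *)
Definition is_volume (m : nat) (A : (nat -> R) -> Prop) (v : R) : Prop :=
  forall eps, 0 < eps -> exists N0 : nat, forall N : nat,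
    (N0 <= N)%nat -> (1 <= N)%nat ->
    exists ci co,
      count_is m (fun k => forall y, gcube m N k y -> A y) ci /\
      count_is m (fun k => exists y, gcube m N k y /\ A y) co /\
      Rabs (INR ci / INR N ^ m - v) < eps /\
      Rabs (INR co / INR N ^ m - v) < eps.

(* The ball S_m(a,b) has sum_j C(m,j) C(a,j) C(b+m-j,m-j) points: splitting on the first
   coordinate reduces this to S_m, and the two resulting sums collapse by the hockey-stick
   identity.  The cube union is a disjoint union of that many unit cubes, and grid counting at
   mesh 1/N confirms its content: each cube contains (N-1)^m and meets at most (N+2)^m cells.
   The convex hull is the polytope {sum_i y_i^+ <= r, sum_i y_i^- <= r}: the constraints are
   convex, and conversely y = sum_{s,t} lambda_s mu_t (r e_s - r e_t) with e_0 = 0.  Grid cells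
   of the polytope at mesh 1/N are sandwiched between S_m(rN-m, rN) and S_m(rN, rN+m), and for
   a, b = rN + O(1) the count above divided by N^m tends to r^m/m! sum_j C(m,j)^2, which is
   r^m/m! C(2m,m) by Vandermonde.  The same asymptotics for |S_m(r,r)| gives the ratio 1. *)

From Stdlib Require Import Reals Lra Lia ZArith List FinFun ClassicalEpsilon.
Import ListNotations.

Local Open Scope nat_scope.

(** * Binomial sums *)

Fixpoint nsum (n : nat) (f : nat -> nat) : nat :=
  match n with 0 => 0 | S n' => nsum n' f + f n' end.

Lemma nsum_succ n f : nsum (S n) f = nsum n f + f n.
Proof. reflexivity. Qed.

Lemma nsum_ext n f g : (forall i, i < n -> f i = g i) -> nsum n f = nsum n g.
Proof.
  induction n as [|n IH]; intros H; simpl; [reflexivity|].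
  rewrite IH by (intros; apply H; lia). rewrite H by lia. reflexivity.
Qed.

Lemma nsum_add n f g : nsum n (fun i => f i + g i) = nsum n f + nsum n g.
Proof. induction n; simpl; lia. Qed.

Lemma nsum_mul_l n c f : nsum n (fun i => c * f i) = c * nsum n f.
Proof. induction n; simpl; lia. Qed.

Lemma nsum_succ_l n f : nsum (S n) f = f 0 + nsum n (fun i => f (S i)).
Proof. induction n as [|n IH]; [simpl; lia|]. cbn [nsum] in *. rewrite IH. lia. Qed.

Lemma nsum_swap n k (f : nat -> nat -> nat) :
  nsum n (fun i => nsum k (f i)) = nsum k (fun j => nsum n (fun i => f i j)).
Proof.
  induction n as [|n IH]; simpl.
  - induction k; simpl; lia.
  - rewrite IH, <- nsum_add. reflexivity.
Qed.

Lemma nsum_trunc n k f : n <= k -> (forall i, n <= i -> f i = 0) -> nsum k f = nsum n f.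
Proof. intros Hnk Hf. induction Hnk; simpl; [reflexivity|]. rewrite Hf by lia. lia. Qed.

Lemma list_sum_map_seq n (f : nat -> nat) : list_sum (map f (seq 0 n)) = nsum n f.
Proof. induction n as [|n IH]; [reflexivity|]. rewrite seq_S, map_app, list_sum_app, IH. simpl. lia. Qed.

Fixpoint binom (n k : nat) : nat :=
  match n, k with
  | _, 0 => 1
  | 0, S _ => 0
  | S n', S k' => binom n' k' + binom n' (S k')
  end.

Lemma binom_0_r n : binom n 0 = 1.
Proof. destruct n; reflexivity. Qed.

Lemma binom_succ n k : binom (S n) (S k) = binom n k + binom n (S k).
Proof. reflexivity. Qed.

Lemma binom_small n k : n < k -> binom n k = 0.
Proof.
  revert k; induction n as [|n IH]; intros [|k] Hk; simpl; try lia.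
  rewrite !IH by lia. reflexivity.
Qed.

Lemma binom_diag n : binom n n = 1.
Proof. induction n as [|n IH]; [reflexivity|]. rewrite binom_succ, IH, binom_small by lia. reflexivity. Qed.

Lemma binom_pos n k : k <= n -> 1 <= binom n k.
Proof.
  revert k; induction n as [|n IH]; intros [|k] Hk; rewrite ?binom_0_r; try lia.
  rewrite binom_succ. specialize (IH k). lia.
Qed.

Lemma hockey_stick n k : nsum n (fun i => binom i k) = binom n (S k).
Proof.
  induction n as [|n IH]; [reflexivity|].
  rewrite nsum_succ, IH, binom_succ. lia.
Qed.

Lemma hockey_stick_shift b k : nsum (S b) (fun t => binom (t + k) k) = binom (S (b + k)) (S k).
Proof.
  induction b as [|b IH].
  - cbn [nsum]. rewrite !Nat.add_0_l, binom_succ, binom_diag, binom_small by lia. lia.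
  - rewrite nsum_succ, IH, (binom_succ (S b + k)). simpl. lia.
Qed.

Lemma vandermonde p q k : nsum (S k) (fun j => binom p j * binom q (k - j)) = binom (p + q) k.
Proof.
  revert k; induction p as [|p IH]; intros k.
  - rewrite nsum_succ_l, (nsum_ext _ _ (fun _ => 0)) by (intros; simpl; lia).
    assert (Hz : forall n, nsum n (fun _ => 0) = 0) by (induction n; simpl; lia).
    rewrite Hz, Nat.sub_0_r. simpl. lia.
  - destruct k as [|k]; [simpl; rewrite !binom_0_r; reflexivity|].
    rewrite nsum_succ_l, binom_0_r.
    rewrite (nsum_ext _ _ (fun j => binom p j * binom q (k - j) + binom p (S j) * binom q (S k - S j))).
    2:{ intros i _. rewrite binom_succ. replace (S k - S i) with (k - i) by lia. lia. }
    rewrite nsum_add, IH.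
    pose proof (IH (S k)) as H2. rewrite nsum_succ_l, binom_0_r in H2.
    rewrite Nat.add_succ_l, binom_succ. lia.
Qed.

Definition lattice_count (m a b : nat) : nat :=
  nsum (S m) (fun j => binom m j * binom a j * binom (b + m - j) (m - j)).

(* A point of S_{m+1}(a,b) starts with x = t - b (t <= b), leaving the budget (a, t) for the
   other coordinates, or with x = a - s (s < a), leaving (s, b). *)
Lemma lattice_count_succ m a b :
  lattice_count (S m) a b =
  nsum (S b) (fun t => lattice_count m a t) + nsum a (fun s => lattice_count m s b).
Proof.
  assert (Hneg : forall j, j < S m -> nsum (S b) (fun t => binom m j * binom a j * binom (t + m - j) (m - j))
                         = binom m j * binom a j * binom (S (b + (m - j))) (S (m - j))).
  { intros j Hj. rewrite <- hockey_stick_shift, <- nsum_mul_l.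
    apply nsum_ext. intros t _. do 2 f_equal. lia. }
  assert (Hpos : forall j, nsum a (fun s => binom m j * binom s j * binom (b + m - j) (m - j))
                         = binom m j * binom a (S j) * binom (b + m - j) (m - j)).
  { intros j. rewrite <- hockey_stick.
    transitivity (binom m j * binom (b + m - j) (m - j) * nsum a (fun s => binom s j)).
    - rewrite <- nsum_mul_l. apply nsum_ext. intros s _. ring.
    - ring. }
  unfold lattice_count. rewrite (nsum_swap (S b)), (nsum_swap a).
  rewrite (nsum_ext _ _ _ Hneg), (nsum_ext _ _ _ (fun j _ => Hpos j)).
  rewrite (nsum_ext (S (S m)) _ (fun j => binom m j * binom a j * binom (b + S m - j) (S m - j)
      + match j with 0 => 0 | S j' => binom m j' * binom a j * binom (b + S m - j) (S m - j) end)).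
  2:{ intros [|j] _; [rewrite !binom_0_r; lia | rewrite binom_succ; lia]. }
  rewrite nsum_add. f_equal.
  - rewrite nsum_succ, (binom_small m (S m)) by lia. rewrite Nat.add_0_r.
    apply nsum_ext. intros j Hj. do 2 f_equal; lia.
  - rewrite nsum_succ_l. apply nsum_ext. intros j Hj. do 2 f_equal; lia.
Qed.

(** * Enumerating the lattice ball *)

Lemma NoDup_flat_map {A B} (g : A -> list B) l :
  NoDup l -> (forall x, In x l -> NoDup (g x)) ->
  (forall x x' y, In x l -> In x' l -> In y (g x) -> In y (g x') -> x = x') ->
  NoDup (flat_map g l).
Proof.
  intros Hl; induction Hl as [|x l Hx Hl IH]; intros Hg Hdisj; simpl; [constructor|].
  apply NoDup_app; [apply Hg; simpl; auto | apply IH; intros; [apply Hg | eapply Hdisj]; simpl; eauto |].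
  intros y Hy Hy'. apply in_flat_map in Hy' as [x' [Hx' Hy']].
  apply Hx. rewrite (Hdisj x x' y); simpl; auto.
Qed.

Lemma NoDup_flat_map_cons {A} (xs : list A) (L : A -> list (list A)) :
  NoDup xs -> (forall x, NoDup (L x)) -> NoDup (flat_map (fun x => map (cons x) (L x)) xs).
Proof.
  intros Hxs HL. apply NoDup_flat_map; auto.
  - intros x _. apply Injective_map_NoDup; [intros u v E; injection E; auto | apply HL].
  - intros x x' y _ _ Hy Hy'. apply in_map_iff in Hy as [q [<- _]], Hy' as [q' [E _]].
    injection E; auto.
Qed.


Local Open Scope Z_scope.

Definition posZ (p : list Z) : Z := fold_right (fun x acc => Z.max x 0 + acc) 0 p.
Definition negZ (p : list Z) : Z := fold_right (fun x acc => Z.max (- x) 0 + acc) 0 p.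

Lemma posZ_nonneg p : 0 <= posZ p.
Proof. induction p; simpl; lia. Qed.

Lemma negZ_nonneg p : 0 <= negZ p.
Proof. induction p; simpl; lia. Qed.

Definition coord_range (a b : nat) : list Z :=
  map (fun t => Z.of_nat t - Z.of_nat b) (seq 0 (S b)) ++
  map (fun s => Z.of_nat a - Z.of_nat s) (seq 0 a).

Lemma In_coord_range a b x : In x (coord_range a b) <-> - Z.of_nat b <= x <= Z.of_nat a.
Proof.
  unfold coord_range. rewrite in_app_iff, !in_map_iff. split.
  - intros [[t [<- Ht]] | [s [<- Hs]]]; apply in_seq in Ht || apply in_seq in Hs; lia.
  - intros Hx. destruct (Z_le_gt_dec x 0).
    + left. exists (Z.to_nat (x + Z.of_nat b)). rewrite in_seq. lia.
    + right. exists (Z.to_nat (Z.of_nat a - x)). rewrite in_seq. lia.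
Qed.

Lemma NoDup_coord_range a b : NoDup (coord_range a b).
Proof.
  unfold coord_range. apply NoDup_app.
  - apply Injective_map_NoDup; [intros ? ? ?; lia | apply seq_NoDup].
  - apply Injective_map_NoDup; [intros ? ? ?; lia | apply seq_NoDup].
  - intros x H1 H2. apply in_map_iff in H1 as [t [<- Ht]], H2 as [s [E Hs]].
    apply in_seq in Ht, Hs. lia.
Qed.

Fixpoint Sm_list (m a b : nat) : list (list Z) :=
  match m with
  | O => [[]]
  | S m' => flat_map (fun x => map (cons x)
              (Sm_list m' (a - Z.to_nat (Z.max x 0)) (b - Z.to_nat (Z.max (- x) 0))))
              (coord_range a b)
  end.

Lemma NoDup_Sm_list m a b : NoDup (Sm_list m a b).
Proof.
  revert a b; induction m as [|m IH]; intros a b; cbn [Sm_list].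
  - repeat constructor. auto.
  - apply NoDup_flat_map_cons; [apply NoDup_coord_range | auto].
Qed.

Lemma In_Sm_list m a b p : In p (Sm_list m a b) <-> Sm m a b p.
Proof.
  unfold Sm. revert a b p; induction m as [|m IH]; intros a b p; cbn [Sm_list].
  - split; [intros [<- | []]; simpl; lia |].
    intros [Hp _]. destruct p; [left; reflexivity | discriminate].
  - rewrite in_flat_map. split.
    + intros [x [Hx Hp]]. apply in_map_iff in Hp as [q [<- Hq]].
      apply IH in Hq. apply In_coord_range in Hx. simpl. lia.
    + intros [Hl [Hpos Hneg]]. destruct p as [|x q]; [discriminate|]. simpl in Hl, Hpos, Hneg.
      pose proof (posZ_nonneg q); pose proof (negZ_nonneg q); unfold posZ, negZ in *.
      exists x. split; [apply In_coord_range; lia|].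
      apply in_map, IH. lia.
Qed.

Lemma length_Sm_list m a b : length (Sm_list m a b) = lattice_count m a b.
Proof.
  revert a b; induction m as [|m IH]; intros a b.
  - unfold lattice_count. simpl. rewrite !binom_0_r. reflexivity.
  - rewrite lattice_count_succ. cbn [Sm_list].
    rewrite length_flat_map. unfold coord_range.
    rewrite map_app, list_sum_app, !map_map, <- !list_sum_map_seq.
    f_equal; f_equal; apply map_ext_in; intros t Ht; apply in_seq in Ht;
      rewrite length_map, IH; f_equal; lia.
Qed.

Local Open Scope R_scope.

(** * Finite sums and limits of real sequences *)

Fixpoint rsum (n : nat) (f : nat -> R) : R :=
  match n with O => 0 | S n' => rsum n' f + f n' end.

Fixpoint rprod (n : nat) (f : nat -> R) : R :=
  match n with O => 1 | S n' => rprod n' f * f n' end.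

Lemma rsum_ext n f g : (forall i, (i < n)%nat -> f i = g i) -> rsum n f = rsum n g.
Proof.
  induction n as [|n IH]; intros H; simpl; [reflexivity|].
  rewrite IH by (intros; apply H; lia). rewrite H by lia. reflexivity.
Qed.

Lemma rsum_add n f g : rsum n (fun i => f i + g i) = rsum n f + rsum n g.
Proof. induction n as [|n IH]; simpl; [ring | rewrite IH; ring]. Qed.

Lemma rsum_mul_l n c f : rsum n (fun i => c * f i) = c * rsum n f.
Proof. induction n as [|n IH]; simpl; [ring | rewrite IH; ring]. Qed.

Lemma rsum_const n c : rsum n (fun _ => c) = INR n * c.
Proof. induction n as [|n IH]; [simpl; ring|]. rewrite S_INR. simpl. rewrite IH. ring. Qed.

Lemma rsum_le n f g : (forall i, (i < n)%nat -> f i <= g i) -> rsum n f <= rsum n g.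
Proof.
  induction n as [|n IH]; intros H; simpl; [lra|].
  apply Rplus_le_compat; [apply IH; intros; apply H|apply H]; lia.
Qed.

Lemma rsum_succ_l n f : rsum (S n) f = f 0%nat + rsum n (fun i => f (S i)).
Proof. induction n as [|n IH]; simpl in *; [ring | rewrite IH; ring]. Qed.

Lemma INR_nsum n f : INR (nsum n f) = rsum n (fun i => INR (f i)).
Proof. induction n as [|n IH]; simpl; [reflexivity|]. rewrite plus_INR, IH. reflexivity. Qed.

Lemma rprod_div n f c : c <> 0 -> rprod n f / c ^ n = rprod n (fun i => f i / c).
Proof.
  intros Hc. induction n as [|n IH]; simpl; [field|].
  rewrite <- IH. field. split; [|apply pow_nonzero]; assumption.
Qed.

Lemma rprod_const n c : rprod n (fun _ => c) = c ^ n.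
Proof. induction n as [|n IH]; simpl; [reflexivity | rewrite IH; ring]. Qed.

Lemma rprod_eq_0 n f i : (i < n)%nat -> f i = 0 -> rprod n f = 0.
Proof.
  induction n as [|n IH]; intros Hi Hf; simpl; [lia|].
  destruct (Nat.eq_dec i n) as [->|]; [rewrite Hf | rewrite IH by (auto; lia)]; ring.
Qed.

Lemma Un_cv_const c : Un_cv (fun _ => c) c.
Proof. intros eps Heps. exists 0%nat. intros. unfold Rdist. rewrite Rminus_diag, Rabs_R0. exact Heps. Qed.

Lemma Un_cv_eventually_ext (x y : nat -> R) l N0 :
  (forall N, (N0 <= N)%nat -> x N = y N) -> Un_cv x l -> Un_cv y l.
Proof.
  intros Exy Hx eps Heps. destruct (Hx eps Heps) as [N1 HN1].
  exists (Nat.max N0 N1). intros N HN. rewrite <- Exy by lia. apply HN1. lia.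
Qed.

Lemma Un_cv_by_rate (x : nat -> R) l K :
  (forall N, (1 <= N)%nat -> Rabs (x N - l) <= K / INR N) -> Un_cv x l.
Proof.
  intros Hx eps Heps.
  assert (HK : 0 < Rabs K + 1) by (pose proof (Rabs_pos K); lra).
  destruct (archimed_cor1 (eps / (Rabs K + 1))) as [N0 [HN0 HN0pos]].
  { apply Rdiv_lt_0_compat; assumption. }
  exists N0. intros N HN. unfold Rdist.
  assert (H0 : 0 < INR N0) by (apply lt_0_INR; lia).
  assert (H1 : / INR N <= / INR N0) by (apply Rinv_le_contravar; [|apply le_INR]; auto).
  assert (H2 : 0 < / INR N) by (apply Rinv_0_lt_compat, lt_0_INR; lia).
  eapply Rle_lt_trans; [apply Hx; lia|].
  apply Rle_lt_trans with ((Rabs K + 1) * / INR N0).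
  - unfold Rdiv. pose proof (Rle_abs K). nra.
  - apply Rmult_lt_reg_l with (/ (Rabs K + 1)); [apply Rinv_0_lt_compat; lra|].
    rewrite <- Rmult_assoc, Rinv_l, Rmult_1_l by lra. unfold Rdiv in HN0. lra.
Qed.

Lemma Un_cv_pow (x : nat -> R) l k : Un_cv x l -> Un_cv (fun N => x N ^ k) (l ^ k).
Proof. intros H. induction k; simpl; [apply Un_cv_const | apply CV_mult; auto]. Qed.

Lemma Un_cv_rsum n (x : nat -> nat -> R) (l : nat -> R) :
  (forall j, (j < n)%nat -> Un_cv (fun N => x N j) (l j)) ->
  Un_cv (fun N => rsum n (x N)) (rsum n l).
Proof.
  induction n as [|n IH]; intros H; simpl; [apply Un_cv_const|].
  apply CV_plus; [apply IH; intros; apply H|apply H]; lia.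
Qed.

Lemma Un_cv_rprod n (x : nat -> nat -> R) (l : nat -> R) :
  (forall j, (j < n)%nat -> Un_cv (fun N => x N j) (l j)) ->
  Un_cv (fun N => rprod n (x N)) (rprod n l).
Proof.
  induction n as [|n IH]; intros H; simpl; [apply Un_cv_const|].
  apply CV_mult; [apply IH; intros; apply H|apply H]; lia.
Qed.

Lemma Un_cv_inv (x : nat -> R) l : l <> 0 -> Un_cv x l -> Un_cv (fun N => / x N) (/ l).
Proof.
  intros Hl Hx. apply (continuity_seq Rinv x l); [|exact Hx].
  apply (continuity_pt_inv (fun t => t)); [apply derivable_continuous_pt, derivable_pt_id | exact Hl].
Qed.

(** * Asymptotics of the lattice count *)

Lemma INR_binom n k : (k <= n)%nat -> INR (binom n k) = C n k.
Proof.
  assert (C_n0 : forall n, C n 0 = 1).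
  { intros. unfold C. rewrite Nat.sub_0_r. simpl. field. apply INR_fact_neq_0. }
  revert k; induction n as [|n IH]; intros [|k] Hk; rewrite ?binom_0_r, ?C_n0; try reflexivity; try lia.
  rewrite binom_succ, plus_INR. destruct (Nat.eq_dec k n) as [->|].
  - rewrite binom_diag, binom_small, (pascal_step1 (S n)), Nat.sub_diag, C_n0 by lia. simpl. ring.
  - rewrite !IH by lia. apply pascal. lia.
Qed.

Lemma binom_fact n k : (k <= n)%nat ->
  INR (binom n k) * INR (fact k) * INR (fact (n - k)) = INR (fact n).
Proof. intros H. rewrite INR_binom by exact H. unfold C. field. split; apply INR_fact_neq_0. Qed.

Lemma fact_div_fact a j : (j <= a)%nat ->
  INR (fact a) / INR (fact (a - j)) = rprod j (fun i => INR a - INR i).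
Proof.
  induction j as [|j IH]; intros Hj; simpl rprod.
  - rewrite Nat.sub_0_r. field. apply INR_fact_neq_0.
  - rewrite <- IH by lia. replace (a - j)%nat with (S (a - S j)) by lia.
    rewrite fact_simpl, mult_INR.
    replace (INR a - INR j) with (INR (S (a - S j))) by (rewrite <- minus_INR by lia; f_equal; lia).
    field. split; [apply INR_fact_neq_0 | apply not_0_INR; lia].
Qed.

Lemma binom_falling a j : INR (binom a j) * INR (fact j) = rprod j (fun i => INR a - INR i).
Proof.
  destruct (le_lt_dec j a) as [Hj|Hj].
  - rewrite <- fact_div_fact, <- (binom_fact a j Hj) by exact Hj.
    field. apply INR_fact_neq_0.
  - rewrite binom_small, (rprod_eq_0 _ _ a) by (auto; ring). simpl. ring.
Qed.

Lemma Un_cv_affine (a : nat -> nat) r c i :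
  (forall N, - c <= INR (a N) - r * INR N <= c) ->
  Un_cv (fun N => (INR (a N) - INR i) / INR N) r.
Proof.
  intros Ha. apply Un_cv_by_rate with (K := c + INR i). intros N HN.
  assert (HN' : 0 < INR N) by (apply lt_0_INR; lia).
  replace ((INR (a N) - INR i) / INR N - r) with ((INR (a N) - r * INR N - INR i) / INR N)
    by (field; lra).
  unfold Rdiv. rewrite Rabs_mult, (Rabs_right (/ INR N)) by (apply Rle_ge, Rlt_le, Rinv_0_lt_compat, HN').
  apply Rmult_le_compat_r; [apply Rlt_le, Rinv_0_lt_compat, HN'|].
  specialize (Ha N). pose proof (pos_INR i). apply Rabs_le. lra.
Qed.

Lemma Un_cv_binom_affine (a : nat -> nat) r c j :
  (forall N, - c <= INR (a N) - r * INR N <= c) ->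
  Un_cv (fun N => INR (binom (a N) j) / INR N ^ j) (r ^ j / INR (fact j)).
Proof.
  intros Ha.
  apply Un_cv_eventually_ext with
    (x := fun N => rprod j (fun i => (INR (a N) - INR i) / INR N) / INR (fact j)) (N0 := 1%nat).
  { intros N HN. assert (INR N <> 0) by (apply not_0_INR; lia).
    rewrite <- rprod_div, <- binom_falling by assumption.
    field. split; [apply pow_nonzero; assumption | apply INR_fact_neq_0]. }
  unfold Rdiv at 2. apply CV_mult; [|apply Un_cv_const].
  rewrite <- rprod_const. apply Un_cv_rprod. intros i _. apply Un_cv_affine with c. exact Ha.
Qed.

Lemma rsum_binom_exp m r :
  rsum (S m) (fun j => INR (binom m j) * (r ^ j / INR (fact j)) * (r ^ (m - j) / INR (fact (m - j))))
  = r ^ m / INR (fact m) * C (2 * m) m.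
Proof.
  rewrite (rsum_ext _ _ (fun j => r ^ m / INR (fact m) * INR (binom m j * binom m (m - j)))).
  2:{ intros j Hj.
      assert (Hsym : binom m (m - j) = binom m j)
        by (apply INR_eq; rewrite !INR_binom, <- pascal_step1 by lia; reflexivity).
      assert (Hb : INR (binom m j) <> 0) by (apply not_0_INR; pose proof (binom_pos m j); lia).
      rewrite Hsym, mult_INR, <- (binom_fact m j) by lia.
      replace (r ^ m) with (r ^ j * r ^ (m - j)) by (rewrite <- pow_add; f_equal; lia).
      field. repeat split; auto; apply INR_fact_neq_0. }
  rewrite rsum_mul_l, <- INR_nsum, vandermonde, INR_binom by lia.
  f_equal. f_equal. lia.
Qed.

Lemma Un_cv_lattice_count m (a b : nat -> nat) r c :
  (forall N, - c <= INR (a N) - r * INR N <= c) ->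
  (forall N, - c <= INR (b N) - r * INR N <= c) ->
  Un_cv (fun N => INR (lattice_count m (a N) (b N)) / INR N ^ m) (r ^ m / INR (fact m) * C (2 * m) m).
Proof.
  intros Ha Hb. rewrite <- rsum_binom_exp.
  apply Un_cv_eventually_ext with (N0 := 1%nat) (x := fun N => rsum (S m) (fun j =>
    INR (binom m j) * (INR (binom (a N) j) / INR N ^ j)
                    * (INR (binom (b N + m - j) (m - j)) / INR N ^ (m - j)))).
  { intros N HN. assert (INR N <> 0) by (apply not_0_INR; lia).
    unfold lattice_count. rewrite INR_nsum. unfold Rdiv at 3. rewrite Rmult_comm, <- rsum_mul_l.
    apply rsum_ext. intros j Hj. rewrite !mult_INR.
    replace (INR N ^ m) with (INR N ^ j * INR N ^ (m - j)) by (rewrite <- pow_add; f_equal; lia).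
    field. split; apply pow_nonzero; assumption. }
  apply Un_cv_rsum. intros j Hj.
  apply CV_mult; [apply CV_mult; [apply Un_cv_const | apply Un_cv_binom_affine with c; exact Ha]|].
  apply Un_cv_binom_affine with (c + INR m). intros N.
  specialize (Hb N). rewrite <- Nat.add_sub_assoc, plus_INR by lia.
  assert (INR (m - j) <= INR m) by (apply le_INR; lia). pose proof (pos_INR (m - j)). lra.
Qed.

(** * Jordan content by grid counting *)

Lemma count_is_exists m (P : list Z -> Prop) (L : list (list Z)) :
  (forall k, length k = m -> P k -> In k L) -> exists c, count_is m P c /\ (c <= length L)%nat.
Proof.
  intros HL.
  set (inP := fun k => if excluded_middle_informative (length k = m /\ P k) then true else false).
  set (l := nodup (list_eq_dec Z.eq_dec) (filter inP L)).
  assert (Hl : forall k, In k l <-> length k = m /\ P k).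
  { intros k. unfold l. rewrite nodup_In, filter_In. unfold inP.
    destruct (excluded_middle_informative _) as [Hk|Hk].
    - split; [tauto | intros _; split; [apply HL; apply Hk | reflexivity]].
    - split; [intros [_ E]; discriminate E | tauto]. }
  exists (length l). split.
  - exists l. split; [apply NoDup_nodup | split; [reflexivity | exact Hl]].
  - apply NoDup_incl_length; [apply NoDup_nodup|]. intros k Hk. apply Hl in Hk. apply HL; apply Hk.
Qed.

Lemma count_is_ge m P c L : count_is m P c -> NoDup L ->
  (forall k, In k L -> length k = m /\ P k) -> (length L <= c)%nat.
Proof.
  intros [l [_ [<- Hl]]] HnL HL. apply NoDup_incl_length; [exact HnL|].
  intros k Hk. apply Hl, HL, Hk.
Qed.

Lemma count_is_unique m P c c' : count_is m P c -> count_is m P c' -> c = c'.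
Proof.
  intros Hc Hc'. pose proof Hc as [l [Hnl [Hlen Hl]]]. pose proof Hc' as [l' [Hnl' [Hlen' Hl']]].
  apply Nat.le_antisymm.
  - rewrite <- Hlen. apply (count_is_ge m P c' l Hc' Hnl). intros k Hk. apply Hl, Hk.
  - rewrite <- Hlen'. apply (count_is_ge m P c l' Hc Hnl'). intros k Hk. apply Hl', Hk.
Qed.

Lemma gcube_corner m N k : (1 <= N)%nat -> gcube m N k (fun i => IZR (nth i k 0%Z) / INR N).
Proof.
  intros HN i _. assert (0 < INR N) by (apply lt_0_INR; lia).
  split; [lra|]. apply Rmult_le_compat_r; [apply Rlt_le, Rinv_0_lt_compat; assumption | lra].
Qed.

Lemma Rabs_lt_between a x b v eps :
  a <= x <= b -> Rabs (a - v) < eps -> Rabs (b - v) < eps -> Rabs (x - v) < eps.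
Proof. intros Hx Ha Hb. apply Rabs_def2 in Ha, Hb. apply Rabs_def1; lra. Qed.

Lemma is_volume_squeeze m A v (inner outer : nat -> list (list Z)) N0 :
  (forall N, (N0 <= N)%nat -> NoDup (inner N)) ->
  (forall N k, (N0 <= N)%nat -> (1 <= N)%nat -> In k (inner N) ->
     length k = m /\ forall y, gcube m N k y -> A y) ->
  (forall N k, (1 <= N)%nat -> length k = m -> (exists y, gcube m N k y /\ A y) -> In k (outer N)) ->
  Un_cv (fun N => INR (length (inner N)) / INR N ^ m) v ->
  Un_cv (fun N => INR (length (outer N)) / INR N ^ m) v ->
  is_volume m A v.
Proof.
  intros Hnd Hin Hout Cin Cout eps Heps.
  destruct (Cin eps Heps) as [N1 H1], (Cout eps Heps) as [N2 H2].
  exists (Nat.max N0 (Nat.max N1 N2)). intros N HN HN1.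
  assert (Hsub : forall k, (forall y, gcube m N k y -> A y) -> exists y, gcube m N k y /\ A y).
  { intros k Hk. eexists. split; [|apply Hk]; apply gcube_corner; exact HN1. }
  destruct (count_is_exists m (fun k => forall y, gcube m N k y -> A y) (outer N)) as [ci [Hci Hci']].
  { intros k Hk Hk'. apply Hout; auto. }
  destruct (count_is_exists m (fun k => exists y, gcube m N k y /\ A y) (outer N)) as [co [Hco Hco']].
  { intros k Hk Hk'. apply Hout; auto. }
  assert (Li : (length (inner N) <= ci)%nat).
  { apply (count_is_ge _ _ _ _ Hci (Hnd N ltac:(lia))). intros k Hk. apply Hin; auto; lia. }
  assert (Lo : (length (inner N) <= co)%nat).
  { apply (count_is_ge _ _ _ _ Hco (Hnd N ltac:(lia))). intros k Hk.
    destruct (Hin N k ltac:(lia) HN1 Hk) as [Hl Hk']. split; [exact Hl | apply Hsub, Hk']. }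
  assert (Hpow : 0 < INR N ^ m) by (apply pow_lt, lt_0_INR; lia).
  assert (Hle : forall p q : nat, (p <= q)%nat -> INR p / INR N ^ m <= INR q / INR N ^ m).
  { intros p q Hpq. apply Rmult_le_compat_r; [apply Rlt_le, Rinv_0_lt_compat, Hpow | apply le_INR, Hpq]. }
  specialize (H1 N ltac:(lia)). specialize (H2 N ltac:(lia)).
  exists ci, co. split; [exact Hci|]. split; [exact Hco|]. split.
  - exact (Rabs_lt_between _ _ _ _ _ (conj (Hle _ _ Li) (Hle _ _ Hci')) H1 H2).
  - exact (Rabs_lt_between _ _ _ _ _ (conj (Hle _ _ Lo) (Hle _ _ Hco')) H1 H2).
Qed.

Lemma is_volume_unique m A v w : is_volume m A v -> is_volume m A w -> v = w.
Proof.
  intros Hv Hw. destruct (Req_dec v w) as [|Hne]; [assumption|exfalso].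
  set (eps := Rabs (v - w) / 2).
  assert (Heps : 0 < eps) by (unfold eps; pose proof (Rabs_pos_lt (v - w)); lra).
  destruct (Hv eps Heps) as [N1 H1], (Hw eps Heps) as [N2 H2].
  set (N := S (Nat.max N1 N2)).
  destruct (H1 N ltac:(unfold N; lia) ltac:(unfold N; lia)) as [c [_ [Hc [_ [E1 _]]]]].
  destruct (H2 N ltac:(unfold N; lia) ltac:(unfold N; lia)) as [c' [_ [Hc' [_ [E2 _]]]]].
  rewrite <- (count_is_unique _ _ _ _ Hc Hc') in E2.
  assert (Rabs (v - w) <= Rabs (INR c / INR N ^ m - w) + Rabs (INR c / INR N ^ m - v)).
  { replace (v - w) with ((INR c / INR N ^ m - w) - (INR c / INR N ^ m - v)) by ring.
    eapply Rle_trans; [apply Rabs_triang | rewrite Rabs_Ropp; lra]. }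
  unfold eps in *. lra.
Qed.

(** * The union of unit cubes *)

Lemma Rdiv_le_div_iff a b c : 0 < c -> (a / c <= b / c <-> a <= b).
Proof.
  intros Hc. split; intros H.
  - apply Rmult_le_reg_r with (/ c); [apply Rinv_0_lt_compat|]; assumption.
  - apply Rmult_le_compat_r; [apply Rlt_le, Rinv_0_lt_compat|]; assumption.
Qed.

Lemma gcube_iff m N k y : (1 <= N)%nat ->
  gcube m N k y <-> forall i, (i < m)%nat -> IZR (nth i k 0%Z) <= INR N * y i <= IZR (nth i k 0%Z) + 1.
Proof.
  intros HN. assert (HN' : 0 < INR N) by (apply lt_0_INR; lia).
  assert (Hy : forall i, y i = INR N * y i / INR N) by (intros; field; lra).
  unfold gcube. split; intros H i Hi; specialize (H i Hi).
  - rewrite (Hy i), !Rdiv_le_div_iff in H by exact HN'. exact H.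
  - rewrite (Hy i), !Rdiv_le_div_iff by exact HN'. exact H.
Qed.

Lemma Un_cv_scaled_pow c (f : nat -> nat) m d :
  (forall N, - d <= INR (f N) - INR N <= d) ->
  Un_cv (fun N => INR (c * f N ^ m) / INR N ^ m) (INR c).
Proof.
  intros Hf. assert (Hf1 : forall N, - d <= INR (f N) - 1 * INR N <= d)
    by (intros N; rewrite Rmult_1_l; apply Hf).
  apply Un_cv_eventually_ext with (N0 := 1%nat) (x := fun N => INR c * ((INR (f N) - INR 0) / INR N) ^ m).
  { intros N HN. assert (INR N <> 0) by (apply not_0_INR; lia).
    rewrite mult_INR, pow_INR. simpl INR. unfold Rdiv. rewrite Rminus_0_r, Rpow_mult_distr, pow_inv. ring. }
  pose proof (CV_mult _ _ _ _ (Un_cv_const (INR c)) (Un_cv_pow _ _ m (Un_cv_affine f 1 d 0 Hf1))) as H.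
  rewrite pow1, Rmult_1_r in H. exact H.
Qed.

Local Open Scope Z_scope.

Definition half (N : nat) : Z := Z.of_nat N / 2.

Lemma half_bounds N : 2 * half N <= Z.of_nat N <= 2 * half N + 1.
Proof.
  unfold half. pose proof (Z.div_mod (Z.of_nat N) 2). pose proof (Z.mod_pos_bound (Z.of_nat N) 2). lia.
Qed.

(* Indices k of the cells [k/N, (k+1)/N] inside, resp. meeting, [x - 1/2, x + 1/2]. *)
Definition inner_cells (N : nat) (x : Z) : list Z :=
  map (fun t => Z.of_nat N * x - half N + Z.of_nat t) (seq 0 (N - 1)).

Definition outer_cells (N : nat) (x : Z) : list Z :=
  map (fun t => Z.of_nat N * x - half N - 1 + Z.of_nat t) (seq 0 (N + 2)).

Lemma In_inner_cells N x k : In k (inner_cells N x) ->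
  2 * Z.of_nat N * x - Z.of_nat N <= 2 * k /\ 2 * k + 2 <= 2 * Z.of_nat N * x + Z.of_nat N.
Proof.
  unfold inner_cells. rewrite in_map_iff. intros [t [<- Ht]]. apply in_seq in Ht.
  pose proof (half_bounds N). lia.
Qed.

Lemma inner_cells_disjoint N x x' k :
  In k (inner_cells N x) -> In k (inner_cells N x') -> x = x'.
Proof. intros H H'. apply In_inner_cells in H, H'. nia. Qed.

Lemma In_outer_cells N x k :
  2 * k <= 2 * Z.of_nat N * x + Z.of_nat N -> 2 * Z.of_nat N * x - Z.of_nat N <= 2 * k + 2 ->
  In k (outer_cells N x).
Proof.
  intros H1 H2. pose proof (half_bounds N). unfold outer_cells. apply in_map_iff.
  exists (Z.to_nat (k - (Z.of_nat N * x - half N - 1))). rewrite in_seq. lia.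
Qed.

Lemma NoDup_inner_cells N x : NoDup (inner_cells N x).
Proof. apply Injective_map_NoDup; [intros ? ? ?; lia | apply seq_NoDup]. Qed.

Local Open Scope R_scope.

Lemma cell_in_interval (k x : Z) N y : (1 <= N)%nat ->
  (2 * Z.of_nat N * x - Z.of_nat N <= 2 * k /\ 2 * k + 2 <= 2 * Z.of_nat N * x + Z.of_nat N)%Z ->
  IZR k <= INR N * y <= IZR k + 1 -> IZR x - 1/2 <= y <= IZR x + 1/2.
Proof.
  intros HN [H1 H2] Hy. apply IZR_le in H1, H2.
  rewrite minus_IZR, !mult_IZR, <- INR_IZR_INZ in H1.
  rewrite !plus_IZR, !mult_IZR, <- INR_IZR_INZ in H2.
  assert (0 < INR N) by (apply lt_0_INR; lia). split; nra.
Qed.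

Lemma cell_meets_interval (k x : Z) N y : (1 <= N)%nat ->
  IZR k <= INR N * y <= IZR k + 1 -> IZR x - 1/2 <= y <= IZR x + 1/2 ->
  (2 * k <= 2 * Z.of_nat N * x + Z.of_nat N /\ 2 * Z.of_nat N * x - Z.of_nat N <= 2 * k + 2)%Z.
Proof.
  intros HN Hy Hx. assert (0 < INR N) by (apply lt_0_INR; lia).
  split; apply le_IZR.
  - rewrite plus_IZR, !mult_IZR, <- INR_IZR_INZ. nra.
  - rewrite minus_IZR, !plus_IZR, !mult_IZR, <- INR_IZR_INZ. nra.
Qed.

Fixpoint list_box (f : Z -> list Z) (p : list Z) : list (list Z) :=
  match p with
  | [] => [[]]
  | x :: p' => flat_map (fun z => map (cons z) (list_box f p')) (f x)
  end.

Lemma length_list_box f p K : (forall x, length (f x) = K) -> length (list_box f p) = (K ^ length p)%nat.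
Proof.
  intros Hf. induction p as [|x p IH]; [reflexivity|]. cbn [list_box].
  rewrite flat_map_constant_length with (c := (K ^ length p)%nat), Hf; [simpl; lia|].
  intros z _. rewrite length_map. exact IH.
Qed.

Lemma NoDup_list_box f p : (forall x, NoDup (f x)) -> NoDup (list_box f p).
Proof.
  intros Hf. induction p as [|x p IH]; cbn [list_box]; [repeat constructor; auto|].
  apply NoDup_flat_map_cons; auto.
Qed.

Lemma In_list_box f p q : In q (list_box f p) <->
  length q = length p /\ forall i, (i < length p)%nat -> In (nth i q 0%Z) (f (nth i p 0%Z)).
Proof.
  revert q; induction p as [|x p IH]; intros q; cbn [list_box length].
  - split; [intros [<- | []]; split; [reflexivity | intros; lia]|].
    intros [Hq _]. destruct q; [left; reflexivity | discriminate].
  - rewrite in_flat_map. split.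
    + intros [z [Hz Hq]]. apply in_map_iff in Hq as [q' [<- Hq']]. apply IH in Hq' as [E Hi].
      split; [simpl; lia|]. intros [|i] Hi'; [exact Hz | apply Hi; lia].
    + intros [E Hi]. destruct q as [|z q']; [discriminate|]. exists z.
      split; [apply (Hi 0%nat); lia|]. apply in_map, IH.
      split; [simpl in E; lia|]. intros i Hi'. apply (Hi (S i)). lia.
Qed.

Lemma length_flat_map_list_box f (L : list (list Z)) m K :
  (forall p, In p L -> length p = m) -> (forall x, length (f x) = K) ->
  length (flat_map (list_box f) L) = (length L * K ^ m)%nat.
Proof.
  intros HL Hf. apply flat_map_constant_length.
  intros p Hp. rewrite <- (HL p Hp). apply length_list_box, Hf.
Qed.

Theorem is_volume_cubeset m (P : list Z -> Prop) (L : list (list Z)) :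
  NoDup L -> (forall p, In p L <-> P p) -> (forall p, P p -> length p = m) ->
  is_volume m (cubeset m P) (INR (length L)).
Proof.
  intros HnL HL Hm.
  assert (HLm : forall p, In p L -> length p = m) by (intros p Hp; apply Hm, HL, Hp).
  apply is_volume_squeeze with
    (inner := fun N => flat_map (list_box (inner_cells N)) L)
    (outer := fun N => flat_map (list_box (outer_cells N)) L) (N0 := 0%nat).
  - intros N _. apply NoDup_flat_map; [exact HnL | intros; apply NoDup_list_box, NoDup_inner_cells|].
    intros p p' q Hp Hp' Hq Hq'. apply In_list_box in Hq as [Lq Hq], Hq' as [Lq' Hq'].
    apply nth_ext with (d := 0%Z) (d' := 0%Z); [congruence|]. intros i Hi.
    apply (inner_cells_disjoint N _ _ (nth i q 0%Z)); [apply Hq | apply Hq']; congruence.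
  - intros N k _ HN Hk. apply in_flat_map in Hk as [p [Hp Hk]]. apply In_list_box in Hk as [Lk Hk].
    rewrite (HLm p Hp) in Lk, Hk. split; [exact Lk|].
    intros y Hy. rewrite gcube_iff in Hy by exact HN. exists p. split; [apply HL, Hp|].
    intros i Hi. apply (cell_in_interval (nth i k 0%Z)) with N; auto. apply In_inner_cells, Hk, Hi.
  - intros N k HN Lk [y [Hy [p [Hp Hyp]]]]. rewrite gcube_iff in Hy by exact HN.
    apply in_flat_map. exists p. split; [apply HL, Hp|].
    apply In_list_box. rewrite (Hm p Hp). split; [exact Lk|]. intros i Hi.
    destruct (cell_meets_interval (nth i k 0%Z) (nth i p 0%Z) N (y i)) as [B1 B2]; auto.
    apply In_outer_cells; assumption.
  - apply Un_cv_eventually_ext with (N0 := 0%nat)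
      (x := fun N => INR (length L * (N - 1) ^ m) / INR N ^ m).
    + intros N _. rewrite (length_flat_map_list_box _ _ m (N - 1)); [reflexivity | exact HLm |].
      intros x. unfold inner_cells. rewrite length_map, length_seq. reflexivity.
    + apply Un_cv_scaled_pow with 1. intros [|N]; [simpl; lra|].
      replace (S N - 1)%nat with N by lia. rewrite S_INR. lra.
  - apply Un_cv_eventually_ext with (N0 := 0%nat)
      (x := fun N => INR (length L * (N + 2) ^ m) / INR N ^ m).
    + intros N _. rewrite (length_flat_map_list_box _ _ m (N + 2)); [reflexivity | exact HLm |].
      intros x. unfold outer_cells. rewrite length_map, length_seq. reflexivity.
    + apply Un_cv_scaled_pow with 2. intros N. rewrite plus_INR. simpl. lra.
Qed.

(** * The convex hull *)

Definition lsum {A} (l : list A) (f : A -> R) : R := fold_right (fun x acc => f x + acc) 0 l.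

Lemma lsum_ext {A} (l : list A) f g : (forall x, In x l -> f x = g x) -> lsum l f = lsum l g.
Proof.
  induction l as [|x l IH]; intros H; simpl; [reflexivity|].
  rewrite H by (left; reflexivity). rewrite IH by (intros; apply H; right; assumption).
  reflexivity.
Qed.

Lemma lsum_mul_l {A} (l : list A) c f : lsum l (fun x => c * f x) = c * lsum l f.
Proof. induction l as [|x l IH]; simpl; [ring | rewrite IH; ring]. Qed.

Lemma lsum_le {A} (l : list A) f g : (forall x, In x l -> f x <= g x) -> lsum l f <= lsum l g.
Proof.
  induction l as [|x l IH]; intros H; simpl; [lra|].
  apply Rplus_le_compat; [apply H; left; reflexivity | apply IH; intros; apply H; right; assumption].
Qed.

Lemma lsum_map {A B} (l : list A) (h : A -> B) f : lsum (map h l) f = lsum l (fun x => f (h x)).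
Proof. induction l as [|x l IH]; simpl; [reflexivity | rewrite IH; reflexivity]. Qed.

Lemma lsum_app {A} (l l' : list A) f : lsum (l ++ l') f = lsum l f + lsum l' f.
Proof. induction l as [|x l IH]; simpl; [ring | rewrite IH; ring]. Qed.

Lemma lsum_flat_map {A B} (l : list A) (h : A -> list B) f :
  lsum (flat_map h l) f = lsum l (fun x => lsum (h x) f).
Proof. induction l as [|x l IH]; simpl; [reflexivity | rewrite lsum_app, IH; reflexivity]. Qed.

Lemma lsum_seq n f : lsum (seq 0 n) f = rsum n f.
Proof. induction n as [|n IH]; [reflexivity|]. rewrite seq_S, lsum_app, IH. simpl. ring. Qed.

Lemma lsum_product {A B} (l : list A) (l' : list B) f g :
  lsum l (fun x => lsum l' (fun x' => f x * g x')) = lsum l f * lsum l' g.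
Proof.
  rewrite (lsum_ext l _ (fun x => lsum l' g * f x)) by (intros; rewrite lsum_mul_l; ring).
  rewrite lsum_mul_l. ring.
Qed.

Lemma rsum_lsum_swap {A} m (l : list A) (F : A -> nat -> R) :
  rsum m (fun i => lsum l (fun c => F c i)) = lsum l (fun c => rsum m (F c)).
Proof.
  induction l as [|c l IH]; simpl.
  - rewrite rsum_const. ring.
  - rewrite rsum_add, IH. reflexivity.
Qed.

Lemma rsum_indicator m j c : rsum m (fun i => if Nat.eqb j i then c else 0) = if Nat.ltb j m then c else 0.
Proof.
  induction m as [|m IH]; simpl rsum; [reflexivity|]. rewrite IH.
  destruct (Nat.ltb_spec j m), (Nat.eqb_spec j m), (Nat.ltb_spec j (S m)); try lia; ring.
Qed.

Definition posR (m : nat) (y : nat -> R) : R := rsum m (fun i => Rmax (y i) 0).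

Lemma posR_ext m y z : (forall i, (i < m)%nat -> y i = z i) -> posR m y = posR m z.
Proof. intros H. apply rsum_ext. intros i Hi. rewrite H by exact Hi. reflexivity. Qed.

Lemma posR_le m y z : (forall i, (i < m)%nat -> y i <= z i) -> posR m y <= posR m z.
Proof.
  intros H. apply rsum_le. intros i Hi. specialize (H i Hi).
  unfold Rmax. destruct (Rle_dec (y i) 0), (Rle_dec (z i) 0); lra.
Qed.

Lemma posR_le_shift m y z : (forall i, (i < m)%nat -> y i <= z i + 1) -> posR m y <= posR m z + INR m.
Proof.
  intros H. unfold posR. rewrite <- (Rmult_1_r (INR m)), <- rsum_const, <- rsum_add.
  apply rsum_le. intros i Hi. specialize (H i Hi).
  unfold Rmax. destruct (Rle_dec (y i) 0), (Rle_dec (z i) 0); lra.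
Qed.

Lemma posR_scale m c y : 0 <= c -> posR m (fun i => c * y i) = c * posR m y.
Proof.
  intros Hc. unfold posR. rewrite <- rsum_mul_l. apply rsum_ext. intros i _.
  unfold Rmax. destruct (Rle_dec (c * y i) 0), (Rle_dec (y i) 0); nra.
Qed.

Lemma Rmax_IZR x : Rmax (IZR x) 0 = IZR (Z.max x 0).
Proof.
  destruct (Z.le_ge_cases x 0).
  - rewrite Z.max_r by assumption. apply Rmax_right, IZR_le. assumption.
  - rewrite Z.max_l by lia. apply Rmax_left, IZR_le. lia.
Qed.

Lemma posR_posZ p : posR (length p) (fun i => IZR (nth i p 0%Z)) = IZR (posZ p).
Proof.
  unfold posR. induction p as [|x p IH]; [reflexivity|]. cbn [length].
  rewrite rsum_succ_l. cbn [nth]. rewrite IH. simpl. rewrite plus_IZR, Rmax_IZR. reflexivity.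
Qed.

Lemma posR_negZ p : posR (length p) (fun i => - IZR (nth i p 0%Z)) = IZR (negZ p).
Proof.
  unfold posR. induction p as [|x p IH]; [reflexivity|]. cbn [length].
  rewrite rsum_succ_l. cbn [nth]. rewrite IH. simpl. rewrite plus_IZR, <- opp_IZR, Rmax_IZR. reflexivity.
Qed.

Lemma lsum_nonneg {A} (l : list A) f : (forall x, In x l -> 0 <= f x) -> 0 <= lsum l f.
Proof.
  induction l as [|x l IH]; intros H; simpl; [lra|].
  apply Rplus_le_le_0_compat; [apply H; left; reflexivity | apply IH; intros; apply H; right; assumption].
Qed.

Lemma posR_convex_le {A} m (l : list (R * A)) (g : A -> nat -> R) a :
  (forall c, In c l -> 0 <= fst c /\ posR m (g (snd c)) <= a) -> lsum l fst = 1 ->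
  posR m (fun i => lsum l (fun c => fst c * g (snd c) i)) <= a.
Proof.
  intros Hl Hsum.
  apply Rle_trans with (lsum l (fun c => fst c * posR m (g (snd c)))).
  - unfold posR at 2. rewrite (lsum_ext l _ (fun c => rsum m (fun i => fst c * Rmax (g (snd c) i) 0)))
      by (intros; rewrite rsum_mul_l; reflexivity).
    rewrite <- rsum_lsum_swap. apply rsum_le. intros i _.
    assert (Hmax : forall c, In c l -> fst c * g (snd c) i <= fst c * Rmax (g (snd c) i) 0
                                     /\ 0 <= fst c * Rmax (g (snd c) i) 0).
    { intros c Hc. destruct (Hl c Hc) as [Hw _]. split.
      - apply Rmult_le_compat_l; [exact Hw | apply Rmax_l].
      - apply Rmult_le_pos; [exact Hw | apply Rmax_r]. }
    apply Rmax_lub; [apply lsum_le | apply lsum_nonneg]; intros c Hc; apply Hmax, Hc.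
  - rewrite <- (Rmult_1_r a), <- Hsum, <- lsum_mul_l.
    apply lsum_le. intros c Hc. destruct (Hl c Hc) as [Hw Ha].
    rewrite (Rmult_comm a). apply Rmult_le_compat_l; assumption.
Qed.

Lemma convset_Sm_posR m r y : convset m (Sm m r r) y ->
  posR m y <= INR r /\ posR m (fun i => - y i) <= INR r.
Proof.
  intros [l [Hl [Hsum Hy]]]. rewrite INR_IZR_INZ. split.
  - rewrite (posR_ext m _ (fun i => lsum l (fun c => fst c * IZR (nth i (snd c) 0%Z)))) by exact Hy.
    apply (posR_convex_le m l (fun p i => IZR (nth i p 0%Z))); [|exact Hsum]. intros c Hc.
    destruct (Hl c Hc) as [Hw [Hlen [Hpos _]]]. split; [exact Hw|].
    rewrite <- Hlen, posR_posZ. apply IZR_le, Hpos.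
  - rewrite (posR_ext m _ (fun i => lsum l (fun c => fst c * - IZR (nth i (snd c) 0%Z)))).
    2:{ intros i Hi. rewrite Hy by exact Hi.
        change (fold_right _ 0 l) with (lsum l (fun c => fst c * IZR (nth i (snd c) 0%Z))).
        rewrite <- (Rmult_1_l (lsum _ _)), Ropp_mult_distr_l, <- lsum_mul_l.
        apply lsum_ext. intros; ring. }
    apply (posR_convex_le m l (fun p i => - IZR (nth i p 0%Z))); [|exact Hsum]. intros c Hc.
    destruct (Hl c Hc) as [Hw [Hlen [_ Hneg]]]. split; [exact Hw|].
    rewrite <- Hlen, posR_negZ. apply IZR_le, Hneg.
Qed.

Lemma lsum_sub {A} (l : list A) f g : lsum l (fun x => f x - g x) = lsum l f - lsum l g.
Proof. induction l as [|x l IH]; simpl; [ring | rewrite IH; ring]. Qed.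

Lemma nth_map_seq {A} (f : nat -> A) m i d : (i < m)%nat -> nth i (map f (seq 0 m)) d = f i.
Proof.
  intros Hi. rewrite nth_indep with (d' := f 0%nat) by (rewrite length_map, length_seq; exact Hi).
  rewrite map_nth, seq_nth by exact Hi. reflexivity.
Qed.

Definition vertex (r : nat) (s : option nat) (i : nat) : Z :=
  match s with Some j => if Nat.eqb j i then Z.of_nat r else 0%Z | None => 0%Z end.

Definition vertex_diff (m r : nat) (s t : option nat) : list Z :=
  map (fun i => vertex r s i - vertex r t i)%Z (seq 0 m).

Definition slots (m : nat) : list (option nat) := None :: map Some (seq 0 m).

Lemma lsum_slots m f : lsum (slots m) f = f None + rsum m (fun j => f (Some j)).
Proof.
  unfold slots. cbn [lsum fold_right]. fold (lsum (map Some (seq 0 m)) f).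
  rewrite lsum_map, lsum_seq. reflexivity.
Qed.

Lemma vertex_nonneg r s i : (0 <= vertex r s i)%Z.
Proof. destruct s as [j|]; simpl; [destruct (Nat.eqb j i)|]; lia. Qed.

Lemma posR_vertex m r s : posR m (fun i => IZR (vertex r s i)) <= INR r.
Proof.
  unfold posR. destruct s as [j|]; simpl vertex.
  - rewrite (rsum_ext _ _ (fun i => if Nat.eqb j i then INR r else 0)).
    + rewrite rsum_indicator. destruct (Nat.ltb j m); [lra | apply pos_INR].
    + intros i _. destruct (Nat.eqb j i); rewrite <- ?INR_IZR_INZ;
        [apply Rmax_left, pos_INR | apply Rmax_right; lra].
  - rewrite (rsum_ext _ _ (fun _ => 0)), rsum_const by (intros; apply Rmax_right; lra).
    rewrite Rmult_0_r. apply pos_INR.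
Qed.

Lemma Sm_vertex_diff m r s t : Sm m r r (vertex_diff m r s t).
Proof.
  assert (Hlen : length (vertex_diff m r s t) = m)
    by (unfold vertex_diff; rewrite length_map, length_seq; reflexivity).
  assert (Hnth : forall i, (i < m)%nat ->
            IZR (nth i (vertex_diff m r s t) 0%Z) = IZR (vertex r s i) - IZR (vertex r t i)).
  { intros i Hi. unfold vertex_diff. rewrite nth_map_seq, minus_IZR by exact Hi. reflexivity. }
  split; [exact Hlen|]. split; apply le_IZR; rewrite <- INR_IZR_INZ.
  - change (IZR (posZ (vertex_diff m r s t)) <= INR r). rewrite <- posR_posZ, Hlen.
    eapply Rle_trans; [|apply (posR_vertex m r s)]. apply posR_le. intros i Hi.
    rewrite Hnth by exact Hi. pose proof (IZR_le _ _ (vertex_nonneg r t i)). lra.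
  - change (IZR (negZ (vertex_diff m r s t)) <= INR r). rewrite <- posR_negZ, Hlen.
    eapply Rle_trans; [|apply (posR_vertex m r t)]. apply posR_le. intros i Hi.
    rewrite Hnth by exact Hi. pose proof (IZR_le _ _ (vertex_nonneg r s i)). lra.
Qed.

(* With e_None = 0, vertex r s = r e_s.  A point y of the polytope is y^+ - y^- where
   y^+ = sum_s lambda_s (r e_s) and y^- = sum_t mu_t (r e_t) for the convex weights
   lambda = hull_weight y and mu = hull_weight (-y); hence
   y = sum_{s,t} lambda_s mu_t (r e_s - r e_t), a convex combination of points of S_m(r,r). *)
Section HullWeights.

Variables (m r : nat) (z : nat -> R).
Hypothesis Hr : (1 <= r)%nat.
Hypothesis Hz : posR m z <= INR r.

Definition hull_weight (s : option nat) : R :=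
  match s with None => 1 - posR m z / INR r | Some j => Rmax (z j) 0 / INR r end.

Let r_pos : 0 < INR r.
Proof. apply lt_0_INR. lia. Qed.

Lemma hull_weight_nonneg s : 0 <= hull_weight s.
Proof.
  destruct s as [j|]; simpl.
  - apply Rle_mult_inv_pos; [apply Rmax_r | exact r_pos].
  - enough (posR m z / INR r <= 1) by lra.
    apply Rmult_le_reg_r with (INR r); [exact r_pos|]. unfold Rdiv. rewrite Rmult_assoc, Rinv_l; lra.
Qed.

Lemma hull_weight_sum : lsum (slots m) hull_weight = 1.
Proof.
  rewrite lsum_slots. simpl. unfold posR. unfold Rdiv.
  rewrite (rsum_ext m (fun j => Rmax (z j) 0 * / INR r) (fun j => / INR r * Rmax (z j) 0))
    by (intros; ring).
  rewrite rsum_mul_l. ring.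
Qed.

Lemma hull_weight_vertex i : (i < m)%nat ->
  lsum (slots m) (fun s => hull_weight s * IZR (vertex r s i)) = Rmax (z i) 0.
Proof.
  intros Hi. rewrite lsum_slots. simpl. rewrite Rmult_0_r, Rplus_0_l.
  rewrite (rsum_ext _ _ (fun j => if Nat.eqb i j then Rmax (z i) 0 else 0)).
  - rewrite rsum_indicator. destruct (Nat.ltb_spec i m); [reflexivity | lia].
  - intros j _. destruct (Nat.eqb_spec j i) as [->|]; [rewrite Nat.eqb_refl|].
    + rewrite <- INR_IZR_INZ. field. lra.
    + destruct (Nat.eqb_spec i j); [lia | ring].
Qed.

End HullWeights.

Lemma polytope_sub_convset m r y : (1 <= r)%nat ->
  posR m y <= INR r -> posR m (fun i => - y i) <= INR r -> convset m (Sm m r r) y.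
Proof.
  intros Hr Hp Hn.
  set (lam := hull_weight m r y). set (mu := hull_weight m r (fun i => - y i)).
  set (l := flat_map (fun s => map (fun t => (lam s * mu t, vertex_diff m r s t)) (slots m)) (slots m)).
  assert (Hl : forall F, lsum l F = lsum (slots m) (fun s => lsum (slots m) (fun t =>
                                     F (lam s * mu t, vertex_diff m r s t)))).
  { intros F. unfold l. rewrite lsum_flat_map. apply lsum_ext. intros s _. apply lsum_map. }
  exists l. split; [|split].
  - intros c Hc. apply in_flat_map in Hc as [s [_ Hc]]. apply in_map_iff in Hc as [t [<- _]].
    split; [apply Rmult_le_pos; apply hull_weight_nonneg; assumption | apply Sm_vertex_diff].
  - change (lsum l fst = 1). rewrite Hl. simpl fst.
    unfold lam, mu. rewrite lsum_product, !hull_weight_sum by assumption. ring.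
  - intros i Hi. change (y i = lsum l (fun c => fst c * IZR (nth i (snd c) 0%Z))). rewrite Hl.
    rewrite (lsum_ext _ _ (fun s => lsum (slots m) (fun t => lam s * IZR (vertex r s i) * mu t)
                                  - lsum (slots m) (fun t => lam s * (mu t * IZR (vertex r t i))))).
    2:{ intros s _. rewrite <- lsum_sub. apply lsum_ext. intros t _. simpl.
        unfold vertex_diff. rewrite nth_map_seq, minus_IZR by exact Hi. ring. }
    unfold lam, mu. rewrite lsum_sub, !lsum_product, !hull_weight_sum, !hull_weight_vertex by assumption.
    unfold Rmax. destruct (Rle_dec (y i) 0), (Rle_dec (- y i) 0); lra.
Qed.

Lemma gcube_posR_bounds m N k y : (1 <= N)%nat -> length k = m -> gcube m N k y ->
  IZR (posZ k) <= INR N * posR m y <= IZR (posZ k) + INR m /\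
  INR N * posR m (fun i => - y i) <= IZR (negZ k) <= INR N * posR m (fun i => - y i) + INR m.
Proof.
  intros HN Hk Hy. rewrite gcube_iff in Hy by exact HN.
  assert (HN' : 0 <= INR N) by apply pos_INR.
  rewrite <- posR_posZ, <- posR_negZ, Hk, <- !posR_scale by exact HN'.
  repeat split.
  - apply posR_le. intros i Hi. apply Hy, Hi.
  - apply posR_le_shift. intros i Hi. apply Hy, Hi.
  - apply posR_le. intros i Hi. specialize (Hy i Hi). lra.
  - apply posR_le_shift. intros i Hi. specialize (Hy i Hi). lra.
Qed.

Lemma outer_cell_convset m r N k : (1 <= N)%nat -> length k = m ->
  (exists y, gcube m N k y /\ convset m (Sm m r r) y) -> Sm m (r * N) (r * N + m) k.
Proof.
  intros HN Hk [y [Hy Hc]]. apply convset_Sm_posR in Hc as [Hp Hn].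
  destruct (gcube_posR_bounds m N k y HN Hk Hy) as [[B1 _] [_ B2]].
  assert (HN' : 0 <= INR N) by apply pos_INR.
  split; [exact Hk|]. split; apply le_IZR; rewrite <- INR_IZR_INZ, ?plus_INR, mult_INR.
  - change (IZR (posZ k) <= INR r * INR N). nra.
  - change (IZR (negZ k) <= INR r * INR N + INR m). nra.
Qed.

Lemma inner_cell_convset m r N k y : (1 <= r)%nat -> (1 <= N)%nat -> (m <= r * N)%nat ->
  Sm m (r * N - m) (r * N) k -> gcube m N k y -> convset m (Sm m r r) y.
Proof.
  intros Hr HN HrN [Hk [Hp Hn]] Hy.
  change (posZ k <= Z.of_nat (r * N - m))%Z in Hp. change (negZ k <= Z.of_nat (r * N))%Z in Hn.
  destruct (gcube_posR_bounds m N k y HN Hk Hy) as [[_ B1] [B2 _]].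
  apply IZR_le in Hp, Hn. rewrite <- INR_IZR_INZ, minus_INR, mult_INR in Hp by exact HrN.
  rewrite <- INR_IZR_INZ, mult_INR in Hn.
  assert (HN' : 0 < INR N) by (apply lt_0_INR; lia).
  apply polytope_sub_convset; [exact Hr | |]; apply Rmult_le_reg_l with (INR N); lra.
Qed.

Lemma INR_mul_sub_bounds r N d : - INR d <= INR (r * N - d) - INR r * INR N <= INR d.
Proof.
  pose proof (pos_INR d). destruct (le_lt_dec d (r * N)) as [Hd|Hd].
  - rewrite minus_INR, mult_INR by exact Hd. lra.
  - replace (r * N - d)%nat with 0%nat by lia. apply lt_INR in Hd. rewrite mult_INR in Hd.
    pose proof (pos_INR r); pose proof (pos_INR N). simpl INR. nra.
Qed.

Theorem is_volume_convset m r : (1 <= m)%nat ->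
  is_volume m (convset m (Sm m r r)) (INR r ^ m / INR (fact m) * C (2 * m) m).
Proof.
  intros Hm.
  assert (Hlim : forall a b : nat -> nat,
    (forall N, - INR m <= INR (a N) - INR r * INR N <= INR m) ->
    (forall N, - INR m <= INR (b N) - INR r * INR N <= INR m) ->
    Un_cv (fun N => INR (length (Sm_list m (a N) (b N))) / INR N ^ m)
          (INR r ^ m / INR (fact m) * C (2 * m) m)).
  { intros a b Ha Hb. apply Un_cv_eventually_ext with (N0 := 0%nat)
      (x := fun N => INR (lattice_count m (a N) (b N)) / INR N ^ m).
    - intros N _. rewrite length_Sm_list. reflexivity.
    - apply Un_cv_lattice_count with (c := INR m); assumption. }
  assert (Hm' : 0 <= INR m) by apply pos_INR.
  (* For r = 0 the hull is a point and contains no cell. *)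
  apply is_volume_squeeze with (N0 := m)
    (inner := fun N => if Nat.eqb r 0 then [] else Sm_list m (r * N - m) (r * N))
    (outer := fun N => Sm_list m (r * N) (r * N + m)).
  - intros N _. destruct (Nat.eqb r 0); [constructor | apply NoDup_Sm_list].
  - intros N k HmN HN Hk. destruct (Nat.eqb_spec r 0) as [|Hr]; [destruct Hk|].
    apply In_Sm_list in Hk. split; [apply Hk|].
    intros y Hy. apply (inner_cell_convset m r N k y); [lia | exact HN | nia | exact Hk | exact Hy].
  - intros N k HN Hk Hc. apply In_Sm_list, outer_cell_convset; assumption.
  - destruct (Nat.eqb_spec r 0) as [->|Hr].
    + simpl INR. rewrite pow_i by lia. unfold Rdiv. rewrite !Rmult_0_l.
      apply Un_cv_eventually_ext with (N0 := 0%nat) (x := fun _ => 0); [intros; simpl; ring|].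
      apply Un_cv_const.
    + apply Hlim; intros N; [apply INR_mul_sub_bounds | rewrite mult_INR; lra].
  - apply Hlim; intros N; rewrite ?plus_INR, mult_INR; lra.
Qed.

Lemma sum_f_R0_rsum f n : sum_f_R0 f n = rsum (S n) f.
Proof. induction n as [|n IH]; simpl; [ring | rewrite IH; reflexivity]. Qed.

Lemma sum_f_R0_lattice_count m r :
  sum_f_R0 (fun j => C m j * C r j * C (r + m - j) (m - j)) (Nat.min m r) = INR (lattice_count m r r).
Proof.
  unfold lattice_count. rewrite (nsum_trunc (S (Nat.min m r))), INR_nsum, sum_f_R0_rsum; [| lia |].
  - apply rsum_ext. intros j Hj. rewrite !mult_INR, !INR_binom by lia. reflexivity.
  - intros j Hj. destruct (le_lt_dec j m); [rewrite (binom_small r j) | rewrite (binom_small m j)]; lia.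
Qed.

Lemma lattice_count_pos m a b : (1 <= lattice_count m a b)%nat.
Proof.
  unfold lattice_count. rewrite nsum_succ_l, !binom_0_r, !Nat.sub_0_r.
  pose proof (binom_pos (b + m) m). lia.
Qed.

Lemma is_volume_cubeset_Sm m r : is_volume m (cubeset m (Sm m r r)) (INR (lattice_count m r r)).
Proof.
  rewrite <- length_Sm_list. apply is_volume_cubeset; [apply NoDup_Sm_list | apply In_Sm_list |].
  intros p Hp. apply Hp.
Qed.

Lemma Un_cv_convset_cubeset_ratio m :
  Un_cv (fun r => (INR r ^ m / INR (fact m) * C (2 * m) m) / INR (lattice_count m r r)) 1.
Proof.
  set (K := C (2 * m) m / INR (fact m)).
  assert (HK : 0 < K).
  { unfold K. rewrite <- INR_binom by lia. apply Rdiv_lt_0_compat; [|apply INR_fact_lt_0].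
    apply lt_0_INR, binom_pos. lia. }
  assert (Hlim : Un_cv (fun N => INR (lattice_count m N N) / INR N ^ m) K).
  { replace K with (1 ^ m / INR (fact m) * C (2 * m) m)
      by (unfold K; rewrite pow1; field; apply INR_fact_neq_0).
    apply (Un_cv_lattice_count m (fun N => N) (fun N => N) 1 0); intros N; lra. }
  replace 1 with (K * / K) by (field; lra).
  apply Un_cv_eventually_ext with (N0 := 1%nat) (x := fun N => K * / (INR (lattice_count m N N) / INR N ^ m)).
  - intros N HN. pose proof (lattice_count_pos m N N) as Hc. apply le_INR in Hc.
    assert (0 < INR N ^ m) by (apply pow_lt, lt_0_INR; lia).
    unfold K. simpl INR in Hc. field. repeat split; try lra; apply INR_fact_neq_0.
  - apply CV_mult; [apply Un_cv_const | apply Un_cv_inv; [lra | exact Hlim]].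
Qed.

Theorem mainTheorem10 (m : nat) (hm : (1 <= m)%nat) :
  (forall r : nat,
     is_volume m (cubeset m (Sm m r r))
       (sum_f_R0 (fun j => C m j * C r j * C (r + m - j) (m - j)) (Nat.min m r))) /\
  (forall r : nat,
     is_volume m (convset m (Sm m r r))
       (INR r ^ m / INR (fact m) * C (2 * m) m)) /\
  (forall vcube vconv : nat -> R,
     (forall r, is_volume m (cubeset m (Sm m r r)) (vcube r)) ->
     (forall r, is_volume m (convset m (Sm m r r)) (vconv r)) ->
     Un_cv (fun r => vconv r / vcube r) 1).
Proof.
  split; [|split].
  - intros r. rewrite sum_f_R0_lattice_count. apply is_volume_cubeset_Sm.
  - intros r. apply is_volume_convset, hm.
  - intros vcube vconv Hcube Hconv.
    apply Un_cv_eventually_ext with (N0 := 0%nat) (2 := Un_cv_convset_cubeset_ratio m).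
    intros r _.
    rewrite (is_volume_unique _ _ _ _ (Hcube r) (is_volume_cubeset_Sm m r)).
    rewrite (is_volume_unique _ _ _ _ (Hconv r) (is_volume_convset m r hm)).
    reflexivity.
Qed.
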